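(* Let $Z$ be a separable real Banach space and $f:Z\to\mathbb{R}$ a continuous convex function. Then there exists a unique closed linear subspace $Y_f$ of $Z$ such that, for the quotient space $X_f:=Z/Y_f$ and the natural projection $\pi:Z\to X_f$, the function $f$ can be written as $$f(z)=c(\pi(z))+\ell(z)\quad\text{for all } z\in Z,$$ where $\ell\in Z^*$ and $c:X_f\to\mathbb{R}$ is a convex function which is essentially directionally coercive. Moreover, $$Y_f=\{v\in Z: f(z_0+tv)-f(z_0)-\langle \xi_0,tv\rangle=0 \text{ for all } t\in\mathbb{R}\},$$ where $z_0$ is any point of $Z$ and $\xi_0$ is any element of $\partial f(z_0)$.
   Context: For a continuous convex $f$ on a Banach space $Z$, $\partial f(x)=\{\xi\in Z^*: f(y)\ge f(x)+\langle\xi,y-x\rangle \text{ for all } y\in Z\}$. A function $g$ on a Banach space $X$ is directionally coercive if $\lim_{t\to\infty}g(x+tv)=\infty$ for all $x\in X$, $v\in X\setminus\{0\}$; it is essentially directionally coercive if there is $\ell\in X^*$ with $g-\ell$ directionally coercive. $Z/Y_f$ carries the quotient norm. *)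

From Stdlib Require Import Reals Lra.
Open Scope R_scope.

Record Banach := {
  car :> Type;
  vzero : car;
  vadd : car -> car -> car;
  vopp : car -> car;
  vscal : R -> car -> car;
  vnorm : car -> R;
  vadd_assoc : forall x y z, vadd x (vadd y z) = vadd (vadd x y) z;
  vadd_comm : forall x y, vadd x y = vadd y x;
  vadd_0 : forall x, vadd x vzero = x;
  vadd_opp : forall x, vadd x (vopp x) = vzero;
  vscal_1 : forall x, vscal 1 x = x;
  vscal_assoc : forall a b x, vscal a (vscal b x) = vscal (a * b) x;
  vscal_distr_v : forall a x y, vscal a (vadd x y) = vadd (vscal a x) (vscal a y);
  vscal_distr_s : forall a b x, vscal (a + b) x = vadd (vscal a x) (vscal b x);
  vnorm_eq0 : forall x, vnorm x = 0 -> x = vzero;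
  vnorm_scal : forall a x, vnorm (vscal a x) = Rabs a * vnorm x;
  vnorm_tri : forall x y, vnorm (vadd x y) <= vnorm x + vnorm y;
  vcomplete : forall u : nat -> car,
    (forall eps, eps > 0 -> exists N, forall m n, (m >= N)%nat -> (n >= N)%nat ->
        vnorm (vadd (u m) (vopp (u n))) < eps) ->
    exists l, forall eps, eps > 0 -> exists N, forall n, (n >= N)%nat ->
        vnorm (vadd (u n) (vopp l)) < eps
}.

Arguments vzero {_}.
Arguments vadd {_}.
Arguments vopp {_}.
Arguments vscal {_}.
Arguments vnorm {_}.

Definition vsub {Z : Banach} (x y : Z) : Z := vadd x (vopp y).

Definition separable (Z : Banach) : Prop :=
  exists d : nat -> Z, forall z eps, eps > 0 -> exists n, vnorm (vsub z (d n)) < eps.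

Definition continuous_fun {Z : Banach} (f : Z -> R) : Prop :=
  forall x eps, eps > 0 -> exists delta, delta > 0 /\
    forall y, vnorm (vsub y x) < delta -> Rabs (f y - f x) < eps.

Definition convex_fun {Z : Banach} (f : Z -> R) : Prop :=
  forall x y a, 0 <= a <= 1 ->
    f (vadd (vscal a x) (vscal (1 - a) y)) <= a * f x + (1 - a) * f y.

Definition linear_fun {Z : Banach} (l : Z -> R) : Prop :=
  (forall x y, l (vadd x y) = l x + l y) /\ (forall a x, l (vscal a x) = a * l x).

Definition in_dual {Z : Banach} (l : Z -> R) : Prop :=
  linear_fun l /\ exists C, forall x, Rabs (l x) <= C * vnorm x.

Definition subdiff {Z : Banach} (f : Z -> R) (x : Z) (xi : Z -> R) : Prop :=
  in_dual xi /\ forall y, f y >= f x + xi (vsub y x).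

Definition closed_subspace {Z : Banach} (Y : Z -> Prop) : Prop :=
  Y vzero /\ (forall x y, Y x -> Y y -> Y (vadd x y)) /\
  (forall a x, Y x -> Y (vscal a x)) /\
  (forall (u : nat -> Z) z, (forall n, Y (u n)) ->
     (forall eps, eps > 0 -> exists N, forall n, (n >= N)%nat -> vnorm (vsub (u n) z) < eps) ->
     Y z).

(* The quotient X = Z/Y is modelled by Z with the equivalence
   z ~ z' iff z - z' in Y.  A function on X is a function on Z constant on
   cosets; 0 in X is the class Y. *)
Definition coset_invariant {Z : Banach} (Y : Z -> Prop) (c : Z -> R) : Prop :=
  forall z y, Y y -> c (vadd z y) = c z.

(* An element of (Z/Y)^*: linear on Z/Y (i.e. linear on Z and vanishing on Y)
   and bounded w.r.t. the quotient norm ||[z]|| = inf_{y in Y} ||z + y||. *)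
Definition in_quot_dual {Z : Banach} (Y : Z -> Prop) (l : Z -> R) : Prop :=
  linear_fun l /\ (forall y, Y y -> l y = 0) /\
  exists C, C >= 0 /\ forall z y, Y y -> Rabs (l z) <= C * vnorm (vadd z y).

(* Directional coercivity on the quotient Z/Y of g (given as a coset-invariant
   function on Z): for every x and every nonzero v in Z/Y,
   lim_{t -> +oo} g(x + t v) = +oo. *)
Definition quot_dir_coercive {Z : Banach} (Y : Z -> Prop) (g : Z -> R) : Prop :=
  forall x v, ~ Y v -> forall M, exists T, forall t, t > T ->
    g (vadd x (vscal t v)) > M.

Definition quot_ess_dir_coercive {Z : Banach} (Y : Z -> Prop) (c : Z -> R) : Prop :=
  exists l, in_quot_dual Y l /\ quot_dir_coercive Y (fun z => c z - l z).

Definition decomposes {Z : Banach} (f : Z -> R) (Y : Z -> Prop) : Prop :=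
  closed_subspace Y /\
  exists (l : Z -> R) (c : Z -> R),
    in_dual l /\ coset_invariant Y c /\ convex_fun c /\
    quot_ess_dir_coercive Y c /\
    (forall z, f z = c z + l z).

(* Fix [z0] and a subgradient [xi0] of [f] at [z0].  A direction [v] lies in
   [Y_f] when [f] agrees with its supporting affine function [f z0 + xi0 (. - z0)]
   on the line through [z0] directed by [v]; convexity and continuity propagate
   this to every parallel line, so [Y_f] is a closed subspace which does not
   depend on [(z0, xi0)] and [f - xi0] is invariant under translation by [Y_f].
   Subgradients exist everywhere by a Hahn-Banach extension along a dense
   sequence [d].

   For essential coercivity take subgradients [xi n] of [f] at [d n] and the
   functional [l = sum_n a_n (xi n - xi0)] with small weights [a_n].  Then
   [f - xi0 - l] dominates a positive combination of the nonnegative functions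
   [f - xi n - min (f - xi n)].  If [f - xi0 - l] did not tend to [+oo] along
   some ray directed by [v], all these functions would be bounded above on that
   ray, hence nonincreasing along [v]; this forces [f] to be affine with slope
   [xi0 v] along [v] through every [d n], hence everywhere by density, i.e.
   [v] lies in [Y_f]. *)

From Stdlib Require Import Reals Lra Lia List Classical ClassicalEpsilon.
From Coquelicot Require Import Coquelicot.
Open Scope R_scope.

(** * Identities in a vector space *)

(* [vec_eq] proves an identity between vector expressions by reifying both sides
   as formal linear combinations of their atoms and comparing coefficients. *)

Inductive vexpr : Type :=
| VAtom (n : nat) | VZero | VAdd (a b : vexpr) | VOpp (a : vexpr) | VScal (r : R) (a : vexpr).

Fixpoint vexpr_eval (Z : Banach) (env : list (car Z)) (e : vexpr) : car Z :=
  match e with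
  | VAtom n => nth n env vzero
  | VZero => vzero
  | VAdd a b => vadd (vexpr_eval Z env a) (vexpr_eval Z env b)
  | VOpp a => vopp (vexpr_eval Z env a)
  | VScal r a => vscal r (vexpr_eval Z env a)
  end.

Fixpoint vexpr_coef (e : vexpr) (i : nat) : R :=
  match e with
  | VAtom n => if Nat.eqb n i then 1 else 0
  | VZero => 0
  | VAdd a b => vexpr_coef a i + vexpr_coef b i
  | VOpp a => - vexpr_coef a i
  | VScal r a => r * vexpr_coef a i
  end.

Fixpoint lincomb (Z : Banach) (env : list (car Z)) (c : nat -> R) : car Z :=
  match env with
  | nil => vzero
  | x :: env' => vadd (vscal (c 0%nat) x) (lincomb Z env' (fun i => c (S i)))
  end.

Section VectorAlgebra.
Context {Z : Banach}.
Implicit Types x y : car Z.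

Lemma vadd_0_l x : vadd vzero x = x.
Proof. rewrite vadd_comm; apply vadd_0. Qed.

Lemma vadd_cancel_r x y z : vadd x z = vadd y z -> x = y.
Proof.
  intro H. rewrite <- (vadd_0 Z x), <- (vadd_0 Z y), <- (vadd_opp Z z).
  rewrite !vadd_assoc, H. reflexivity.
Qed.

Lemma vscal_0_l x : vscal 0 x = vzero.
Proof.
  apply (vadd_cancel_r _ _ (vscal 0 x)).
  rewrite <- vscal_distr_s, vadd_0_l. f_equal; ring.
Qed.

Lemma vscal_0_r a : vscal a (@vzero Z) = vzero.
Proof. rewrite <- (vscal_0_l vzero), vscal_assoc, Rmult_0_r. reflexivity. Qed.

Lemma vopp_scal x : vopp x = vscal (-1) x.
Proof.
  apply (vadd_cancel_r _ _ x). rewrite vadd_comm, vadd_opp, vadd_comm.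
  rewrite <- (vscal_1 Z x) at 1. rewrite <- vscal_distr_s, <- (vscal_0_l x).
  f_equal; ring.
Qed.

Lemma lincomb_ext env c1 c2 : (forall i, (i < length env)%nat -> c1 i = c2 i) ->
  lincomb Z env c1 = lincomb Z env c2.
Proof.
  revert c1 c2; induction env as [|x env IH]; intros c1 c2 H; simpl; auto.
  rewrite (H 0%nat) by (simpl; lia). f_equal.
  apply IH. intros i Hi. apply H. simpl; lia.
Qed.

Lemma lincomb_add env c1 c2 :
  lincomb Z env (fun i => c1 i + c2 i) = vadd (lincomb Z env c1) (lincomb Z env c2).
Proof.
  revert c1 c2; induction env as [|x env IH]; intros c1 c2; simpl.
  - rewrite vadd_0; reflexivity.
  - rewrite IH, vscal_distr_s, <- !vadd_assoc. f_equal.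
    rewrite !vadd_assoc. f_equal. apply vadd_comm.
Qed.

Lemma lincomb_scal env r c :
  lincomb Z env (fun i => r * c i) = vscal r (lincomb Z env c).
Proof.
  revert c; induction env as [|x env IH]; intros c; simpl.
  - rewrite vscal_0_r; reflexivity.
  - rewrite IH, vscal_distr_v, vscal_assoc. reflexivity.
Qed.

Lemma lincomb_opp env c : lincomb Z env (fun i => - c i) = vopp (lincomb Z env c).
Proof. rewrite vopp_scal, <- lincomb_scal. apply lincomb_ext. intros; ring. Qed.

Lemma lincomb_zero env : lincomb Z env (fun _ => 0) = vzero.
Proof.
  rewrite <- (vscal_0_l (lincomb Z env (fun _ => 0))), <- lincomb_scal.
  apply lincomb_ext; intros; ring.
Qed.

Lemma lincomb_atom env n :
  lincomb Z env (fun i => if Nat.eqb n i then 1 else 0) = nth n env vzero.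
Proof.
  revert n; induction env as [|x env IH]; intros n; simpl.
  - destruct n; reflexivity.
  - destruct n as [|m]; simpl.
    + rewrite vscal_1, lincomb_zero, vadd_0. reflexivity.
    + rewrite vscal_0_l, vadd_0_l. apply IH.
Qed.

Lemma vexpr_eval_lincomb env e : vexpr_eval Z env e = lincomb Z env (vexpr_coef e).
Proof.
  induction e; simpl.
  - symmetry; apply lincomb_atom.
  - symmetry; apply lincomb_zero.
  - rewrite lincomb_add, IHe1, IHe2; reflexivity.
  - rewrite lincomb_opp, IHe; reflexivity.
  - rewrite lincomb_scal, IHe; reflexivity.
Qed.
End VectorAlgebra.

Fixpoint forall_lt (n : nat) (P : nat -> Prop) : Prop :=
  match n with O => True | S k => forall_lt k P /\ P k end.

Lemma forall_ltP n P : forall_lt n P -> forall i, (i < n)%nat -> P i.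
Proof.
  induction n as [|n IH]; simpl; intros H i Hi; [lia|]. destruct H as [H1 H2].
  destruct (Nat.eq_dec i n); [subst; auto | apply IH; auto; lia].
Qed.

Lemma vexpr_eval_eq (Z : Banach) env e1 e2 :
  forall_lt (length env) (fun i => vexpr_coef e1 i = vexpr_coef e2 i) ->
  vexpr_eval Z env e1 = vexpr_eval Z env e2.
Proof.
  intro H. rewrite !vexpr_eval_lincomb. apply lincomb_ext, forall_ltP, H.
Qed.

Ltac vlookup x l :=
  match l with
  | cons x _ => constr:(O)
  | cons _ ?l' => let n := vlookup x l' in constr:(S n)
  end.

Ltac vadd_atom x l :=
  match constr:(tt) with
  | _ => let _ := vlookup x l in constr:(l)
  | _ => constr:(app l (cons x nil))
  end.

Ltac vcollect t l :=
  match t with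
  | vadd ?a ?b => let l1 := vcollect a l in vcollect b l1
  | vsub ?a ?b => let l1 := vcollect a l in vcollect b l1
  | vopp ?a => vcollect a l
  | vscal _ ?a => vcollect a l
  | vzero => l
  | _ => vadd_atom t l
  end.

Ltac vreify t l :=
  match t with
  | vadd ?a ?b => let ra := vreify a l in let rb := vreify b l in constr:(VAdd ra rb)
  | vsub ?a ?b => let ra := vreify a l in let rb := vreify b l in constr:(VAdd ra (VOpp rb))
  | vopp ?a => let ra := vreify a l in constr:(VOpp ra)
  | vscal ?r ?a => let ra := vreify a l in constr:(VScal r ra)
  | vzero => constr:(VZero)
  | _ => let n := vlookup t l in constr:(VAtom n)
  end.

Ltac vec_eq_with tac :=
  match goal with
  | |- @eq (car ?Z) ?a ?b =>
    let l0 := vcollect a (@nil (car Z)) in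
    let l := vcollect b l0 in
    let l' := eval simpl in l in
    let ea := vreify a l' in let eb := vreify b l' in
    change (vexpr_eval Z l' ea = vexpr_eval Z l' eb);
    apply vexpr_eval_eq; simpl; repeat split; tac
  end.
Ltac vec_eq := vec_eq_with ltac:(ring).

Lemma Rabs_le_every_pos_0 x : (forall eps, 0 < eps -> Rabs x <= eps) -> x = 0.
Proof.
  intro H. destruct (Req_dec x 0) as [|Hx]; auto. exfalso.
  assert (0 < Rabs x) by (apply Rabs_pos_lt; auto).
  specialize (H (Rabs x / 2) ltac:(lra)). lra.
Qed.

(** * Norms and linear functionals *)

Section Norms.
Context {Z : Banach}.
Implicit Types x y z : car Z.

Lemma vnorm_0 : vnorm (@vzero Z) = 0.
Proof. rewrite <- (vscal_0_l (@vzero Z)), vnorm_scal, Rabs_R0; ring. Qed.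

Lemma vnorm_opp x : vnorm (vopp x) = vnorm x.
Proof.
  rewrite vopp_scal, vnorm_scal.
  replace (Rabs (-1)) with 1 by (rewrite Rabs_left; lra). ring.
Qed.

Lemma vnorm_ge_0 x : 0 <= vnorm x.
Proof.
  pose proof (vnorm_tri Z x (vopp x)) as H.
  rewrite vadd_opp, vnorm_0, vnorm_opp in H. lra.
Qed.

Lemma vnorm_gt_0 x : x <> vzero -> 0 < vnorm x.
Proof.
  intro H. destruct (vnorm_ge_0 x) as [|E]; auto.
  exfalso; apply H, vnorm_eq0; auto.
Qed.

Lemma vnorm_sub_sym x y : vnorm (vsub x y) = vnorm (vsub y x).
Proof.
  replace (vsub y x) with (vopp (vsub x y)) by vec_eq. now rewrite vnorm_opp.
Qed.

Lemma vnorm_sub_tri x y z : vnorm (vsub x z) <= vnorm (vsub x y) + vnorm (vsub y z).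
Proof.
  replace (vsub x z) with (vadd (vsub x y) (vsub y z)) by vec_eq. apply vnorm_tri.
Qed.

Lemma vnorm_scal_sub a x y :
  vnorm (vsub (vscal a x) (vscal a y)) = Rabs a * vnorm (vsub x y).
Proof.
  replace (vsub (vscal a x) (vscal a y)) with (vscal a (vsub x y)) by vec_eq.
  apply vnorm_scal.
Qed.

Section Linear.
Variable L : car Z -> R.
Hypothesis HL : linear_fun L.

Lemma lin_add x y : L (vadd x y) = L x + L y.
Proof. apply HL. Qed.
Lemma lin_scal a x : L (vscal a x) = a * L x.
Proof. apply HL. Qed.
Lemma lin_zero : L vzero = 0.
Proof. rewrite <- (vscal_0_l (@vzero Z)), lin_scal; ring. Qed.
Lemma lin_opp x : L (vopp x) = - L x.
Proof. rewrite vopp_scal, lin_scal; ring. Qed.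
Lemma lin_sub x y : L (vsub x y) = L x - L y.
Proof. unfold vsub; rewrite lin_add, lin_opp; ring. Qed.
End Linear.

Lemma in_dual_bound_pos L : in_dual L ->
  exists C, C > 0 /\ forall x, Rabs (L x) <= C * vnorm x.
Proof.
  intros [_ [C HC]]. exists (Rabs C + 1). split; [pose proof (Rabs_pos C); lra|].
  intro x. specialize (HC x). pose proof (Rle_abs C). pose proof (vnorm_ge_0 x). nra.
Qed.

Lemma in_dual_sub_bound L1 L2 : in_dual L1 -> in_dual L2 ->
  exists K, 0 <= K /\ forall x, Rabs (L1 x - L2 x) <= K * vnorm x.
Proof.
  intros H1 H2.
  destruct (in_dual_bound_pos L1 H1) as [C1 [HC1 B1]].
  destruct (in_dual_bound_pos L2 H2) as [C2 [HC2 B2]].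
  exists (C1 + C2). split; [lra|]. intro x.
  eapply Rle_trans; [unfold Rminus; apply Rabs_triang|]. rewrite Rabs_Ropp.
  specialize (B1 x). specialize (B2 x). lra.
Qed.

Lemma continuous_sub_dual (f L : car Z -> R) : continuous_fun f -> in_dual L ->
  continuous_fun (fun w => f w - L w).
Proof.
  intros Hf HL p eps Heps. destruct (in_dual_bound_pos L HL) as [C [HC HCb]].
  destruct (Hf p (eps / 2) ltac:(lra)) as [d [Hd Hdf]].
  exists (Rmin d (eps / (2 * C))). split.
  { apply Rmin_pos; auto. apply Rdiv_lt_0_compat; lra. }
  intros y Hy. pose proof (Rmin_l d (eps / (2 * C))). pose proof (Rmin_r d (eps / (2 * C))).
  specialize (Hdf y ltac:(lra)).
  assert (Hl : Rabs (L y - L p) < eps / 2).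
  { rewrite <- (lin_sub _ (proj1 HL)). eapply Rle_lt_trans; [apply HCb|].
    apply (Rmult_lt_reg_l (/ C)); [apply Rinv_0_lt_compat; auto|].
    rewrite <- Rmult_assoc, Rinv_l, Rmult_1_l by lra.
    replace (/ C * (eps / 2)) with (eps / (2 * C)) by (field; lra). lra. }
  replace (f y - L y - (f p - L p)) with ((f y - f p) - (L y - L p)) by ring.
  eapply Rle_lt_trans; [apply Rabs_triang|]. rewrite Rabs_Ropp. lra.
Qed.
Lemma continuous_along_line (f : car Z -> R) z t : continuous_fun f ->
  continuous_fun (fun w => f (vadd z (vscal t w))).
Proof.
  intros Hf x eps He. destruct (Hf (vadd z (vscal t x)) eps He) as [d [Hd Hdf]].
  exists (d / (Rabs t + 1)). pose proof (Rabs_pos t).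
  split; [apply Rdiv_lt_0_compat; lra|]. intros y Hy. apply Hdf.
  replace (vsub (vadd z (vscal t y)) (vadd z (vscal t x))) with (vscal t (vsub y x)) by vec_eq.
  rewrite vnorm_scal. pose proof (vnorm_ge_0 (vsub y x)).
  apply (Rmult_lt_compat_l (Rabs t + 1)) in Hy; [|lra].
  replace ((Rabs t + 1) * (d / (Rabs t + 1))) with d in Hy by (field; lra). nra.
Qed.

Lemma continuous_limit_const (g : car Z -> R) (u : nat -> car Z) v c : continuous_fun g ->
  (forall n, g (u n) = c) ->
  (forall eps, eps > 0 -> exists N, forall n, (n >= N)%nat -> vnorm (vsub (u n) v) < eps) ->
  g v = c.
Proof.
  intros Hg Hu Hlim. apply Rminus_diag_uniq, Rabs_le_every_pos_0. intros eps He.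
  destruct (Hg v eps He) as [d [Hd Hdg]]. destruct (Hlim d Hd) as [N HN].
  specialize (Hdg (u N) (HN N (le_n _))). rewrite Hu, <- Rabs_Ropp in Hdg.
  replace (- (c - g v)) with (g v - c) in Hdg by ring. lra.
Qed.
End Norms.

Ltac lin_simpl H := repeat (rewrite ?(lin_add _ H), ?(lin_sub _ H), ?(lin_scal _ H),
  ?(lin_opp _ H), ?(lin_zero _ H)).
Ltac lin_simpl_in H X := repeat (rewrite ?(lin_add _ H), ?(lin_sub _ H), ?(lin_scal _ H),
  ?(lin_opp _ H), ?(lin_zero _ H) in X).

(** * Convex functions of one real variable *)

Definition convex_R (phi : R -> R) : Prop :=
  forall s t a, 0 <= a <= 1 -> phi (a * s + (1 - a) * t) <= a * phi s + (1 - a) * phi t.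

Lemma convex_on_line (Z : Banach) (p : car Z -> R) x v :
  convex_fun p -> convex_R (fun t => p (vadd x (vscal t v))).
Proof.
  intros Hp s t a Ha.
  replace (vadd x (vscal (a * s + (1 - a) * t) v))
    with (vadd (vscal a (vadd x (vscal s v))) (vscal (1 - a) (vadd x (vscal t v)))) by vec_eq.
  apply Hp; auto.
Qed.

Lemma convex_sub_linear (Z : Banach) (p L : car Z -> R) :
  convex_fun p -> linear_fun L -> convex_fun (fun z => p z - L z).
Proof.
  intros Hp HL x y a Ha. lin_simpl HL. pose proof (Hp x y a Ha). nra.
Qed.

Lemma convex_R_above_chord phi t1 t2 t : convex_R phi -> t1 < t2 -> t2 < t ->
  (t - t1) * phi t2 <= (t - t2) * phi t1 + (t2 - t1) * phi t.
Proof.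
  intros Hc H12 H2.
  set (a := (t - t2) / (t - t1)).
  assert (Ha : 0 <= a <= 1).
  { unfold a; split.
    - apply Rmult_le_pos; [lra | left; apply Rinv_0_lt_compat; lra].
    - apply (Rmult_le_reg_r (t - t1)); [lra|]. field_simplify; lra. }
  pose proof (Hc t1 t a Ha) as H.
  replace (a * t1 + (1 - a) * t) with t2 in H by (unfold a; field; lra).
  replace ((t - t2) * phi t1 + (t2 - t1) * phi t)
    with ((a * phi t1 + (1 - a) * phi t) * (t - t1)) by (unfold a; field; lra).
  rewrite Rmult_comm. apply Rmult_le_compat_r; lra.
Qed.

Lemma convex_R_increase_unbounded phi t1 t2 : convex_R phi -> t1 < t2 -> phi t1 < phi t2 ->
  forall M, exists T, forall t, t > T -> phi t > M.
Proof.
  intros Hc H12 Hphi M.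
  set (D := (phi t2 - phi t1) / (t2 - t1)).
  assert (HD : D > 0) by (unfold D; apply Rdiv_lt_0_compat; lra).
  exists (Rmax t2 (t2 + (M - phi t2) / D)). intros t Ht.
  pose proof (Rmax_l t2 (t2 + (M - phi t2) / D)).
  pose proof (Rmax_r t2 (t2 + (M - phi t2) / D)).
  pose proof (convex_R_above_chord phi t1 t2 t Hc H12 ltac:(lra)) as Hch.
  assert (Hg : phi t >= phi t2 + (t - t2) * D).
  { apply Rle_ge, (Rmult_le_reg_r (t2 - t1)); [lra|].
    replace ((phi t2 + (t - t2) * D) * (t2 - t1))
      with ((t - t1) * phi t2 - (t - t2) * phi t1) by (unfold D; field; lra). lra. }
  assert ((t - t2) * D > M - phi t2).
  { replace (M - phi t2) with ((M - phi t2) / D * D) by (field; lra).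
    apply Rmult_lt_compat_r; lra. }
  lra.
Qed.

Lemma convex_R_bounded_nonincreasing phi T0 B : convex_R phi ->
  (forall t, t >= T0 -> phi t <= B) -> forall t1 t2, t1 < t2 -> phi t2 <= phi t1.
Proof.
  intros Hc HB t1 t2 H12. destruct (Rle_or_lt (phi t2) (phi t1)) as [|H]; auto.
  destruct (convex_R_increase_unbounded phi t1 t2 Hc H12 H B) as [T HT].
  set (t := Rmax T T0 + 1). pose proof (Rmax_l T T0). pose proof (Rmax_r T T0).
  specialize (HT t ltac:(unfold t; lra)). specialize (HB t ltac:(unfold t; lra)). lra.
Qed.

Definition nonincreasing_along {Z : Banach} (g : car Z -> R) (v : car Z) : Prop :=
  forall z t1 t2, t1 < t2 -> g (vadd z (vscal t2 v)) <= g (vadd z (vscal t1 v)).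

(* [z + t v] is the midpoint of [2 z - x] and [x + 2 t v]. *)
Lemma convex_bounded_ray_nonincreasing (Z : Banach) (p : car Z -> R) x v B :
  convex_fun p -> (forall t, t >= 0 -> p (vadd x (vscal t v)) <= B) ->
  nonincreasing_along p v.
Proof.
  intros Hp HB z.
  apply (convex_R_bounded_nonincreasing _ 0 (1/2 * p (vsub (vscal 2 z) x) + 1/2 * B)).
  - apply convex_on_line; auto.
  - intros t Ht.
    replace (vadd z (vscal t v)) with (vadd (vscal (1/2) (vsub (vscal 2 z) x))
      (vscal (1 - 1/2) (vadd x (vscal (2 * t) v)))) by vec_eq_with ltac:(field).
    eapply Rle_trans; [apply Hp; lra|]. specialize (HB (2 * t) ltac:(lra)). lra.
Qed.

(** * The lineality space *)

Section Lineality.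
Context {Z : Banach} (f : car Z -> R) (hcont : continuous_fun f) (hconv : convex_fun f).

Definition lineality (z0 : car Z) (xi0 : car Z -> R) (v : car Z) : Prop :=
  forall t : R, f (vadd z0 (vscal t v)) - f z0 - xi0 (vscal t v) = 0.

Lemma subdiff_ineq z xi y : subdiff f z xi -> f y >= f z + xi y - xi z.
Proof. intros [[HL _] H]. specialize (H y). rewrite (lin_sub _ HL) in H. lra. Qed.

Lemma subdiff_slope z xi v s : subdiff f z xi ->
  (forall t, f (vadd z (vscal t v)) = f z + t * s) -> xi v = s.
Proof.
  intros Hs Hline. pose proof (proj1 (proj1 Hs)) as HL.
  pose proof (subdiff_ineq z xi (vadd z (vscal 1 v)) Hs) as S1.
  pose proof (subdiff_ineq z xi (vadd z (vscal (-1) v)) Hs) as S2.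
  rewrite Hline in S1, S2. lin_simpl_in HL S1. lin_simpl_in HL S2. lra.
Qed.

(* [z + t v] is the limit, as [lam -> 0], of [(1 - lam) z + lam (z0 + (t / lam) v)],
   at which convexity bounds [g] by [(1 - lam) g z + lam g z0 <= g z]. *)
Lemma convex_min_line_nonincreasing (g : car Z -> R) z0 v :
  continuous_fun g -> convex_fun g -> (forall w, g z0 <= g w) ->
  (forall s, g (vadd z0 (vscal s v)) = g z0) ->
  forall z t, g (vadd z (vscal t v)) <= g z.
Proof.
  intros Hgc Hgv Hgm Hgl z t. apply le_epsilon. intros eps Heps.
  set (p := vadd z (vscal t v)).
  destruct (Hgc p eps Heps) as [d [Hd0 Hdg]].
  set (n := vnorm (vsub z0 z)). pose proof (vnorm_ge_0 (vsub z0 z)) as Hn0. fold n in Hn0.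
  set (lam := Rmin (1/2) (d / (2 * (n + 1)))).
  assert (Hlam : 0 < lam <= 1/2).
  { unfold lam; split; [apply Rmin_pos; [lra | apply Rdiv_lt_0_compat; lra] | apply Rmin_l]. }
  assert (Hlam2 : lam * n < d).
  { assert (lam <= d / (2 * (n + 1))) by apply Rmin_r.
    apply Rle_lt_trans with (d / (2 * (n + 1)) * n); [apply Rmult_le_compat_r; lra|].
    replace (d / (2 * (n + 1)) * n) with (d * (n / (2 * (n + 1)))) by (field; lra).
    assert (Hq : n / (2 * (n + 1)) < 1) by (apply (Rdiv_lt_1 n); lra).
    assert (0 < d * (1 - n / (2 * (n + 1)))) by (apply Rmult_lt_0_compat; lra). lra. }
  set (w := vadd (vscal (1 - lam) z) (vscal lam (vadd z0 (vscal (t / lam) v)))).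
  assert (Hwp : vnorm (vsub w p) < d).
  { replace (vsub w p) with (vscal lam (vsub z0 z)) by (unfold w, p; vec_eq_with ltac:(field; lra)).
    rewrite vnorm_scal, Rabs_right by lra. fold n. lra. }
  specialize (Hdg w Hwp).
  assert (Hcv : g w <= (1 - lam) * g z + (1 - (1 - lam)) * g (vadd z0 (vscal (t / lam) v))).
  { unfold w. replace lam with (1 - (1 - lam)) at 2 by ring. apply Hgv. lra. }
  rewrite Hgl in Hcv. specialize (Hgm z).
  apply Rabs_def2 in Hdg. nra.
Qed.

Lemma lineality_affine z0 xi0 : subdiff f z0 xi0 -> forall v, lineality z0 xi0 v ->
  forall z t, f (vadd z (vscal t v)) = f z + t * xi0 v.
Proof.
  intros Hs v Hv z t. pose proof (proj1 (proj1 Hs)) as HL.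
  set (g := fun w => f w - xi0 w).
  assert (Hmono : forall z t, g (vadd z (vscal t v)) <= g z).
  { apply (convex_min_line_nonincreasing g z0).
    - apply continuous_sub_dual; auto. apply Hs.
    - apply convex_sub_linear; auto.
    - intro w. pose proof (subdiff_ineq z0 xi0 w Hs). unfold g. lra.
    - intro s. specialize (Hv s). unfold g. lin_simpl HL. lin_simpl_in HL Hv. lra. }
  pose proof (Hmono z t) as H1. pose proof (Hmono (vadd z (vscal t v)) (- t)) as H2.
  replace (vadd (vadd z (vscal t v)) (vscal (- t) v)) with z in H2 by vec_eq.
  unfold g in H1, H2. lin_simpl_in HL H1. lin_simpl_in HL H2. lra.
Qed.

Lemma lineality_iff_affine z0 xi0 : subdiff f z0 xi0 -> forall v,
  lineality z0 xi0 v <-> (forall z t, f (vadd z (vscal t v)) = f z + t * xi0 v).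
Proof.
  intros H0 v. pose proof (proj1 (proj1 H0)) as HL. split.
  - apply lineality_affine; auto.
  - intros H t. rewrite H. lin_simpl HL. ring.
Qed.

Lemma lineality_slope z0 xi0 z1 xi1 : subdiff f z0 xi0 -> subdiff f z1 xi1 ->
  forall v, lineality z0 xi0 v -> xi1 v = xi0 v.
Proof.
  intros H0 H1 v Hv. apply (subdiff_slope z1); auto.
  apply (lineality_affine z0 xi0 H0 v Hv).
Qed.

Lemma lineality_indep z0 xi0 z1 xi1 : subdiff f z0 xi0 -> subdiff f z1 xi1 ->
  forall v, lineality z0 xi0 v -> lineality z1 xi1 v.
Proof.
  intros H0 H1 v Hv. apply (lineality_iff_affine z1 xi1 H1). intros z t.
  rewrite (lineality_slope z0 xi0 z1 xi1 H0 H1 v Hv). apply (lineality_affine z0 xi0 H0 v Hv).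
Qed.

Lemma lineality_closed_limit z0 xi0 : subdiff f z0 xi0 ->
  forall (u : nat -> car Z) v, (forall n, lineality z0 xi0 (u n)) ->
  (forall eps, eps > 0 -> exists N, forall n, (n >= N)%nat -> vnorm (vsub (u n) v) < eps) ->
  lineality z0 xi0 v.
Proof.
  intros H0 u v Hu Hlim. pose proof (proj1 (proj1 H0)) as HL.
  apply (lineality_iff_affine z0 xi0 H0). intros z t.
  assert (Hdual : in_dual (fun w => t * xi0 w)).
  { destruct (proj1 H0) as [_ [C HC]]. split; [split|].
    - intros x y. lin_simpl HL. ring.
    - intros a x. lin_simpl HL. ring.
    - exists (Rabs t * C). intro x. rewrite Rabs_mult, Rmult_assoc.
      apply Rmult_le_compat_l; [apply Rabs_pos | apply HC]. }
  enough (E : f (vadd z (vscal t v)) - t * xi0 v = f z) by lra.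
  apply (continuous_limit_const (fun w => f (vadd z (vscal t w)) - t * xi0 w) u); auto.
  - apply continuous_sub_dual; auto. apply continuous_along_line; auto.
  - intro n. rewrite (lineality_affine z0 xi0 H0 (u n) (Hu n)). ring.
Qed.

Lemma lineality_closed_subspace z0 xi0 : subdiff f z0 xi0 ->
  closed_subspace (lineality z0 xi0).
Proof.
  intros H0. pose proof (proj1 (proj1 H0)) as HL.
  assert (C := lineality_iff_affine z0 xi0 H0).
  split; [|split; [|split]].
  - apply C. intros z t. rewrite vscal_0_r, (lin_zero _ HL).
    replace (vadd z vzero) with z by vec_eq. ring.
  - intros x y Hx Hy. apply C. intros z t. rewrite C in Hx, Hy.
    replace (vadd z (vscal t (vadd x y))) with (vadd (vadd z (vscal t x)) (vscal t y)) by vec_eq.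
    rewrite Hy, Hx. lin_simpl HL. ring.
  - intros a x Hx. apply C. intros z t. rewrite C in Hx.
    replace (vadd z (vscal t (vscal a x))) with (vadd z (vscal (t * a) x)) by vec_eq.
    rewrite Hx. lin_simpl HL. ring.
  - apply lineality_closed_limit; auto.
Qed.

Lemma lineality_coset_invariant z0 xi0 : subdiff f z0 xi0 ->
  coset_invariant (lineality z0 xi0) (fun z => f z - xi0 z).
Proof.
  intros H0 z y Hy. pose proof (proj1 (proj1 H0)) as HL.
  pose proof (lineality_affine z0 xi0 H0 y Hy z 1) as A.
  replace (vadd z (vscal 1 y)) with (vadd z y) in A by vec_eq.
  rewrite A. lin_simpl HL. ring.
Qed.

(* A direction [v] outside a decomposing [Y'] along which [f] is affine would make
   [c - l'] affine along [v], which cannot tend to [+oo] both along [v] and [-v]. *)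
Lemma decomposes_lineality_unique z0 xi0 (Y' : car Z -> Prop) :
  subdiff f z0 xi0 -> decomposes f Y' -> forall v, Y' v <-> lineality z0 xi0 v.
Proof.
  intros H0 [HY [l [c [Hl [Hci [_ [Hcoer Hdec]]]]]]] v.
  pose proof (proj1 (proj1 H0)) as HL0. pose proof (proj1 Hl) as HLl.
  destruct HY as [_ [_ [HYscal _]]].
  split.
  - intros Hv.
    assert (Hline : forall z t, f (vadd z (vscal t v)) = f z + t * l v).
    { intros z t. rewrite !Hdec, Hci by (apply HYscal; auto). lin_simpl HLl. ring. }
    rewrite (lineality_iff_affine z0 xi0 H0). intros z t.
    rewrite (subdiff_slope z0 xi0 v (l v) H0 (Hline z0)). apply Hline.
  - intros Hv. apply NNPP. intro Hn.
    destruct Hcoer as [l' [[HLl' _] Hco]].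
    assert (Hn' : ~ Y' (vopp v)).
    { intro H. apply Hn. replace v with (vscal (-1) (vopp v)) by vec_eq. auto. }
    set (A := f z0 - l z0 - l' z0). set (B := xi0 v - l v - l' v).
    assert (Hc : forall s, c (vadd z0 (vscal s v)) - l' (vadd z0 (vscal s v)) = A + s * B).
    { intro s. pose proof (Hdec (vadd z0 (vscal s v))) as D.
      rewrite (lineality_affine z0 xi0 H0 v Hv) in D.
      unfold A, B. lin_simpl_in HLl D. lin_simpl HLl'. lra. }
    destruct (Hco z0 v Hn A) as [T1 HT1].
    destruct (Hco z0 (vopp v) Hn' A) as [T2 HT2].
    set (t := Rmax T1 T2 + 1).
    pose proof (Rmax_l T1 T2). pose proof (Rmax_r T1 T2).
    specialize (HT1 t ltac:(unfold t; lra)). specialize (HT2 t ltac:(unfold t; lra)).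
    replace (vscal t (vopp v)) with (vscal (- t) v) in HT2 by vec_eq.
    rewrite Hc in HT1, HT2. nra.
Qed.
End Lineality.

(** * Existence of subgradients *)

Lemma Rdiv_le_cross a b s t : s > 0 -> t > 0 -> t * a <= s * b -> a / s <= b / t.
Proof.
  intros Hs Ht H. apply (Rmult_le_reg_r (s * t)); [nra|].
  replace (a / s * (s * t)) with (t * a) by (field; lra).
  replace (b / t * (s * t)) with (s * b) by (field; lra). auto.
Qed.

Lemma glb_exists (E : R -> Prop) (b : R) : (exists x, E x) -> (forall x, E x -> b <= x) ->
  {m | (forall x, E x -> m <= x) /\ forall b', (forall x, E x -> b' <= x) -> b' <= m}.
Proof.
  intros Hne Hb.
  destruct (completeness (fun r => E (- r))) as [m [Hm1 Hm2]].
  - exists (- b). intros r Hr. specialize (Hb _ Hr). lra.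
  - destruct Hne as [x Hx]. exists (- x). rewrite Ropp_involutive; auto.
  - exists (- m). split.
    + intros x Hx. assert (- x <= m) by (apply Hm1; rewrite Ropp_involutive; auto). lra.
    + intros b' Hb'. assert (m <= - b'). { apply Hm2. intros r Hr. specialize (Hb' _ Hr). lra. }
      lra.
Qed.

Section HahnBanach.
Context {Z : Banach} (q : car Z -> R) (hqc : convex_fun q) (hq0 : q vzero = 0)
  (hqcont : continuous_fun q).

Record dominated := {
  dom : car Z -> Prop; dfun : car Z -> R;
  dom_0 : dom vzero;
  dom_add : forall x y, dom x -> dom y -> dom (vadd x y);
  dom_scal : forall a x, dom x -> dom (vscal a x);
  dfun_add : forall x y, dom x -> dom y -> dfun (vadd x y) = dfun x + dfun y;
  dfun_scal : forall a x, dom x -> dfun (vscal a x) = a * dfun x;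
  dfun_le : forall x, dom x -> dfun x <= q x }.

Lemma dfun_0 (S : dominated) : dfun S vzero = 0.
Proof. rewrite <- (vscal_0_l (@vzero Z)), dfun_scal by apply dom_0. ring. Qed.

Lemma dom_sub (S : dominated) x y : dom S x -> dom S y -> dom S (vsub x y).
Proof.
  intros Hx Hy. unfold vsub. rewrite vopp_scal. apply dom_add; auto. apply dom_scal; auto.
Qed.

Lemma dfun_sub (S : dominated) x y : dom S x -> dom S y -> dfun S (vsub x y) = dfun S x - dfun S y.
Proof.
  intros Hx Hy. unfold vsub. rewrite vopp_scal, dfun_add, dfun_scal; auto; [ring|].
  apply dom_scal; auto.
Qed.

Section OneStep.
Variable S : dominated.
Variable w : car Z.
Hypothesis Hw : ~ dom S w.

Lemma dominated_gap u' u s t : dom S u' -> dom S u -> s > 0 -> t > 0 ->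
  (dfun S u' - q (vsub u' (vscal s w))) / s <= (q (vadd u (vscal t w)) - dfun S u) / t.
Proof.
  intros Hu' Hu Hs Ht. apply Rdiv_le_cross; auto.
  set (al := t / (s + t)).
  assert (Hal : 0 <= al <= 1).
  { unfold al; split.
    - apply Rmult_le_pos; [lra | left; apply Rinv_0_lt_compat; lra].
    - apply (Rmult_le_reg_r (s + t)); [lra|]. field_simplify; lra. }
  pose proof (hqc (vsub u' (vscal s w)) (vadd u (vscal t w)) al Hal) as Hc.
  replace (vadd (vscal al (vsub u' (vscal s w))) (vscal (1 - al) (vadd u (vscal t w))))
    with (vadd (vscal al u') (vscal (1 - al) u)) in Hc
    by (unfold al; vec_eq_with ltac:(field; lra)).
  assert (Hp : dom S (vadd (vscal al u') (vscal (1 - al) u))) by (apply dom_add; apply dom_scal; auto).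
  pose proof (dfun_le S _ Hp) as Hd.
  rewrite dfun_add, !dfun_scal in Hd by (try apply dom_scal; auto).
  assert (Hfin : al * dfun S u' + (1 - al) * dfun S u <=
                 al * q (vsub u' (vscal s w)) + (1 - al) * q (vadd u (vscal t w))) by lra.
  apply (Rmult_le_compat_l (s + t)) in Hfin; [|lra].
  replace ((s + t) * (al * dfun S u' + (1 - al) * dfun S u))
    with (t * dfun S u' + s * dfun S u) in Hfin by (unfold al; field; lra).
  replace ((s + t) * (al * q (vsub u' (vscal s w)) + (1 - al) * q (vadd u (vscal t w))))
    with (t * q (vsub u' (vscal s w)) + s * q (vadd u (vscal t w))) in Hfin
    by (unfold al; field; lra).
  lra.
Qed.

Lemma dominated_step_const : exists c,
  (forall u s, dom S u -> s > 0 -> dfun S u - s * c <= q (vsub u (vscal s w))) /\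
  (forall u t, dom S u -> t > 0 -> dfun S u + t * c <= q (vadd u (vscal t w))).
Proof.
  set (A := fun a => exists u s, dom S u /\ s > 0 /\ a = (dfun S u - q (vsub u (vscal s w))) / s).
  destruct (completeness A) as [c [Hc1 Hc2]].
  - exists ((q (vadd vzero (vscal 1 w)) - dfun S vzero) / 1).
    intros a [u [s [Hu [Hs ->]]]]. apply dominated_gap; auto. apply dom_0. lra.
  - exists ((dfun S vzero - q (vsub vzero (vscal 1 w))) / 1).
    exists vzero, 1. split; [apply dom_0|]. split; [lra|auto].
  - exists c. split.
    + intros u s Hu Hs.
      assert (H : (dfun S u - q (vsub u (vscal s w))) / s <= c) by (apply Hc1; exists u, s; auto).
      apply (Rmult_le_compat_l s) in H; [|lra].
      replace (s * ((dfun S u - q (vsub u (vscal s w))) / s))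
        with (dfun S u - q (vsub u (vscal s w))) in H by (field; lra).
      lra.
    + intros u t Hu Ht. assert (H : c <= (q (vadd u (vscal t w)) - dfun S u) / t).
      { apply Hc2. intros a [u' [s [Hu' [Hs ->]]]]. apply dominated_gap; auto. }
      apply (Rmult_le_compat_l t) in H; [|lra].
      replace (t * ((q (vadd u (vscal t w)) - dfun S u) / t))
        with (q (vadd u (vscal t w)) - dfun S u) in H by (field; lra).
      lra.
Qed.

Lemma step_coord_unique x t1 t2 :
  dom S (vsub x (vscal t1 w)) -> dom S (vsub x (vscal t2 w)) -> t1 = t2.
Proof.
  intros H1 H2. apply NNPP. intro Hne. apply Hw.
  replace w with (vscal (/ (t2 - t1)) (vsub (vsub x (vscal t1 w)) (vsub x (vscal t2 w)))).
  - apply dom_scal, dom_sub; auto.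
  - vec_eq_with ltac:(field; intro; apply Hne; lra).
Qed.

Variable c : R.
Hypothesis Hc1 : forall u s, dom S u -> s > 0 -> dfun S u - s * c <= q (vsub u (vscal s w)).
Hypothesis Hc2 : forall u t, dom S u -> t > 0 -> dfun S u + t * c <= q (vadd u (vscal t w)).

Definition step_dom (x : car Z) : Prop := exists t, dom S (vsub x (vscal t w)).
Definition step_coord (x : car Z) : R :=
  epsilon (inhabits 0) (fun t => dom S (vsub x (vscal t w))).
Definition step_fun (x : car Z) : R :=
  dfun S (vsub x (vscal (step_coord x) w)) + step_coord x * c.

Lemma step_coordP x : step_dom x -> dom S (vsub x (vscal (step_coord x) w)).
Proof.
  intro H. apply (epsilon_spec (inhabits 0) (fun t => dom S (vsub x (vscal t w))) H).
Qed.

Lemma step_coord_eq x t : dom S (vsub x (vscal t w)) -> step_coord x = t.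
Proof. intro H. apply (step_coord_unique x); auto. apply step_coordP. exists t; auto. Qed.

Lemma step_dom_0 : step_dom vzero.
Proof. exists 0. replace (vsub vzero (vscal 0 w)) with (@vzero Z) by vec_eq. apply dom_0. Qed.

Lemma step_dom_add x y : step_dom x -> step_dom y -> step_dom (vadd x y).
Proof.
  intros [a Ha] [b Hb]. exists (a + b).
  replace (vsub (vadd x y) (vscal (a + b) w))
    with (vadd (vsub x (vscal a w)) (vsub y (vscal b w))) by vec_eq.
  apply dom_add; auto.
Qed.

Lemma step_dom_scal r x : step_dom x -> step_dom (vscal r x).
Proof.
  intros [a Ha]. exists (r * a).
  replace (vsub (vscal r x) (vscal (r * a) w)) with (vscal r (vsub x (vscal a w))) by vec_eq.
  apply dom_scal; auto.
Qed.

Lemma step_fun_add x y : step_dom x -> step_dom y ->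
  step_fun (vadd x y) = step_fun x + step_fun y.
Proof.
  intros Hx Hy. pose proof (step_coordP x Hx) as Sx. pose proof (step_coordP y Hy) as Sy.
  assert (E : vsub (vadd x y) (vscal (step_coord x + step_coord y) w) =
              vadd (vsub x (vscal (step_coord x) w)) (vsub y (vscal (step_coord y) w))) by vec_eq.
  unfold step_fun. rewrite (step_coord_eq (vadd x y) (step_coord x + step_coord y)).
  - rewrite E, dfun_add; auto. ring.
  - rewrite E. apply dom_add; auto.
Qed.

Lemma step_fun_scal r x : step_dom x -> step_fun (vscal r x) = r * step_fun x.
Proof.
  intros Hx. pose proof (step_coordP x Hx) as Sx.
  assert (E : vsub (vscal r x) (vscal (r * step_coord x) w) =
              vscal r (vsub x (vscal (step_coord x) w))) by vec_eq.
  unfold step_fun. rewrite (step_coord_eq (vscal r x) (r * step_coord x)).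
  - rewrite E, dfun_scal; auto. ring.
  - rewrite E. apply dom_scal; auto.
Qed.

Lemma step_fun_le x : step_dom x -> step_fun x <= q x.
Proof.
  intros Hx. pose proof (step_coordP x Hx) as Sx. unfold step_fun.
  set (t := step_coord x) in *. set (u := vsub x (vscal t w)) in *.
  destruct (Rtotal_order t 0) as [Hlt|[Heq|Hgt]].
  - pose proof (Hc1 u (- t) Sx ltac:(lra)) as H.
    replace (vsub u (vscal (- t) w)) with x in H by (unfold u; vec_eq). lra.
  - assert (E : u = x) by (unfold u; rewrite Heq; vec_eq).
    rewrite E in Sx. rewrite E, Heq. pose proof (dfun_le S x Sx). lra.
  - pose proof (Hc2 u t Sx Hgt) as H.
    replace (vadd u (vscal t w)) with x in H by (unfold u; vec_eq). lra.
Qed.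

Definition step_dominated : dominated :=
  {| dom := step_dom; dfun := step_fun; dom_0 := step_dom_0; dom_add := step_dom_add;
     dom_scal := step_dom_scal; dfun_add := step_fun_add; dfun_scal := step_fun_scal;
     dfun_le := step_fun_le |}.

Lemma step_dominated_ext x : dom S x -> dom step_dominated x /\ dfun step_dominated x = dfun S x.
Proof.
  intro Hx. assert (H0 : dom S (vsub x (vscal 0 w))).
  { replace (vsub x (vscal 0 w)) with x by vec_eq. auto. }
  split; [exists 0; auto|]. simpl. unfold step_fun. rewrite (step_coord_eq x 0 H0).
  replace (vsub x (vscal 0 w)) with x by vec_eq. ring.
Qed.

Lemma step_dominated_w : dom step_dominated w.
Proof. exists 1. replace (vsub w (vscal 1 w)) with (@vzero Z) by vec_eq. apply dom_0. Qed.
End OneStep.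

Lemma dominated_extend (S : dominated) (w : car Z) :
  { S' : dominated | (forall x, dom S x -> dom S' x /\ dfun S' x = dfun S x) /\ dom S' w }.
Proof.
  apply constructive_indefinite_description.
  destruct (classic (dom S w)) as [H|H].
  - exists S. split; auto.
  - destruct (dominated_step_const S w) as [c [Hc1 Hc2]].
    exists (step_dominated S w H c Hc1 Hc2).
    split; [apply step_dominated_ext | apply step_dominated_w].
Qed.

Lemma zero_dom_add (x y : car Z) : x = vzero -> y = vzero -> vadd x y = vzero.
Proof. intros -> ->. vec_eq. Qed.
Lemma zero_dom_scal a (x : car Z) : x = vzero -> vscal a x = vzero.
Proof. intros ->. vec_eq. Qed.
Lemma zero_dfun_add (x y : car Z) : x = vzero -> y = vzero -> (fun _ : car Z => 0) (vadd x y) = 0 + 0.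
Proof. intros; simpl; ring. Qed.
Lemma zero_dfun_scal a (x : car Z) : x = vzero -> (fun _ : car Z => 0) (vscal a x) = a * 0.
Proof. intros; simpl; ring. Qed.
Lemma zero_dfun_le (x : car Z) : x = vzero -> (fun _ : car Z => 0) x <= q x.
Proof. intros ->. rewrite hq0. simpl; lra. Qed.

Definition zero_dominated : dominated :=
  {| dom := fun x => x = vzero; dfun := fun _ => 0; dom_0 := eq_refl;
     dom_add := zero_dom_add; dom_scal := zero_dom_scal; dfun_add := zero_dfun_add;
     dfun_scal := zero_dfun_scal; dfun_le := zero_dfun_le |}.

Lemma dominated_bound : exists K, K > 0 /\
  forall (S : dominated) x, dom S x -> Rabs (dfun S x) <= K * vnorm x.
Proof.
  destruct (hqcont vzero 1 ltac:(lra)) as [del [Hd Hq]].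
  assert (Hsmall : forall u, vnorm u < del -> q u < 1).
  { intros u Hu. replace u with (vsub u vzero) in Hu by vec_eq.
    specialize (Hq u Hu). rewrite hq0 in Hq. apply Rabs_def2 in Hq. lra. }
  exists (2 / del). split; [apply Rdiv_lt_0_compat; lra|].
  intros S x Hx. destruct (classic (x = vzero)) as [->|Hne].
  - rewrite dfun_0, vnorm_0, Rabs_R0. lra.
  - pose proof (vnorm_gt_0 x Hne) as Hn. set (a := del / (2 * vnorm x)).
    assert (Ha : a > 0) by (unfold a; apply Rdiv_lt_0_compat; lra).
    assert (N1 : vnorm (vscal a x) < del).
    { rewrite vnorm_scal, Rabs_right by lra. unfold a. field_simplify; lra. }
    assert (N2 : vnorm (vscal (- a) x) < del).
    { rewrite vnorm_scal, Rabs_left by lra. unfold a. field_simplify; lra. }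
    pose proof (dfun_le S _ (dom_scal S a x Hx)) as D1.
    pose proof (dfun_le S _ (dom_scal S (- a) x Hx)) as D2.
    rewrite dfun_scal in D1, D2 by auto. pose proof (Hsmall _ N1). pose proof (Hsmall _ N2).
    replace (2 / del * vnorm x) with (/ a) by (unfold a; field; lra).
    assert (P1 : dfun S x <= / a)
      by (apply (Rmult_le_reg_l a); [auto | rewrite Rinv_r by lra; lra]).
    assert (P2 : - dfun S x <= / a)
      by (apply (Rmult_le_reg_l a); [auto | rewrite Rinv_r by lra; lra]).
    apply Rabs_le. lra.
Qed.

Section Chain.
Variable d : nat -> car Z.
Hypothesis hd : forall z eps, eps > 0 -> exists n, vnorm (vsub z (d n)) < eps.

Fixpoint chain (n : nat) : dominated :=
  match n with
  | O => zero_dominated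
  | S k => proj1_sig (dominated_extend (chain k) (d k))
  end.

Lemma chain_mono n m x : (n <= m)%nat -> dom (chain n) x ->
  dom (chain m) x /\ dfun (chain m) x = dfun (chain n) x.
Proof.
  intros Hnm Hx. induction Hnm as [|m Hnm IH]; auto.
  destruct IH as [IH1 IH2]. simpl. destruct (dominated_extend (chain m) (d m)) as [S' [HS1 HS2]]. simpl.
  destruct (HS1 x IH1) as [A B]. split; auto. rewrite B; auto.
Qed.

Lemma chain_dense z eps : eps > 0 -> exists n u, dom (chain n) u /\ vnorm (vsub z u) < eps.
Proof.
  intros He. destruct (hd z eps He) as [k Hk]. exists (S k), (d k). split; auto.
  simpl. destruct (dominated_extend (chain k) (d k)) as [S' [HS1 HS2]]. exact HS2.
Qed.

Variable K : R.
Hypothesis HK : K > 0.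
Hypothesis HKb : forall (S : dominated) x, dom S x -> Rabs (dfun S x) <= K * vnorm x.

(* The union of the chain is dense and [K]-Lipschitz, so the infimum of
   [dfun u + K |z - u|] over its points is its continuous extension. *)
Definition upper_vals (z : car Z) (r : R) : Prop :=
  exists n u, dom (chain n) u /\ r = dfun (chain n) u + K * vnorm (vsub z u).

Lemma upper_vals_inhabited z : exists r, upper_vals z r.
Proof. eexists. exists 0%nat, vzero. split; [apply dom_0 | reflexivity]. Qed.

Lemma upper_vals_lb z : forall r, upper_vals z r -> - K * vnorm z <= r.
Proof.
  intros r [n [u [Hu ->]]]. specialize (HKb _ _ Hu). apply Rabs_le_between in HKb.
  assert (vnorm u <= vnorm (vsub u z) + vnorm z).
  { replace u with (vadd (vsub u z) z) at 1 by vec_eq. apply vnorm_tri. }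
  rewrite (vnorm_sub_sym u z) in H. nra.
Qed.

Definition hb_ext (z : car Z) : R :=
  proj1_sig (glb_exists (upper_vals z) _ (upper_vals_inhabited z) (upper_vals_lb z)).

Lemma hb_ext_approx z n u : dom (chain n) u ->
  Rabs (hb_ext z - dfun (chain n) u) <= K * vnorm (vsub z u).
Proof.
  intros Hu. unfold hb_ext.
  destruct (glb_exists (upper_vals z) _ (upper_vals_inhabited z) (upper_vals_lb z))
    as [m [Hm1 Hm2]]; simpl.
  apply Rabs_le. split.
  - assert (dfun (chain n) u - K * vnorm (vsub z u) <= m); [|lra].
    apply Hm2. intros r [n' [u' [Hu' ->]]].
    set (p := Nat.max n n').
    destruct (chain_mono n p u (Nat.le_max_l _ _) Hu) as [A1 A2].
    destruct (chain_mono n' p u' (Nat.le_max_r _ _) Hu') as [B1 B2].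
    rewrite <- A2, <- B2.
    pose proof (HKb _ _ (dom_sub _ _ _ A1 B1)) as Hb.
    rewrite dfun_sub in Hb by auto. apply Rabs_le_between in Hb.
    pose proof (vnorm_sub_tri u z u'). rewrite (vnorm_sub_sym u z) in H. nra.
  - assert (m <= dfun (chain n) u + K * vnorm (vsub z u)) by (apply Hm1; exists n, u; auto).
    lra.
Qed.

Lemma hb_ext_close z eps : eps > 0 -> exists n u, dom (chain n) u /\ vnorm (vsub z u) < eps /\
   Rabs (hb_ext z - dfun (chain n) u) <= K * eps.
Proof.
  intros He. destruct (chain_dense z eps He) as [n [u [Hu Hzu]]].
  exists n, u. do 2 (split; auto).
  eapply Rle_trans; [apply hb_ext_approx; auto | apply Rmult_le_compat_l; lra].
Qed.

Lemma hb_ext_add x y : hb_ext (vadd x y) = hb_ext x + hb_ext y.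
Proof.
  apply Rminus_diag_uniq.
  replace (hb_ext (vadd x y) - (hb_ext x + hb_ext y))
    with (hb_ext (vadd x y) - hb_ext x - hb_ext y) by ring.
  apply Rabs_le_every_pos_0. intros eps He.
  set (e := eps / (4 * K)). assert (He' : e > 0) by (unfold e; apply Rdiv_lt_0_compat; lra).
  destruct (hb_ext_close x e He') as [n1 [u1 [H1 [N1 A1]]]].
  destruct (hb_ext_close y e He') as [n2 [u2 [H2 [N2 A2]]]].
  set (p := Nat.max n1 n2).
  destruct (chain_mono n1 p u1 (Nat.le_max_l _ _) H1) as [P1 E1].
  destruct (chain_mono n2 p u2 (Nat.le_max_r _ _) H2) as [P2 E2].
  pose proof (hb_ext_approx (vadd x y) p (vadd u1 u2) (dom_add _ _ _ P1 P2)) as A3.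
  rewrite dfun_add, E1, E2 in A3 by auto.
  assert (vnorm (vsub (vadd x y) (vadd u1 u2)) <= vnorm (vsub x u1) + vnorm (vsub y u2)).
  { replace (vsub (vadd x y) (vadd u1 u2)) with (vadd (vsub x u1) (vsub y u2)) by vec_eq.
    apply vnorm_tri. }
  apply Rabs_le_between in A1, A2, A3.
  assert (K * e * 4 = eps) by (unfold e; field; lra).
  apply Rabs_le. split; nra.
Qed.

Lemma hb_ext_scal a x : hb_ext (vscal a x) = a * hb_ext x.
Proof.
  apply Rminus_diag_uniq, Rabs_le_every_pos_0. intros eps He.
  set (e := eps / (2 * K * (Rabs a + 1))). pose proof (Rabs_pos a) as Ha.
  assert (He' : e > 0) by (unfold e; apply Rdiv_lt_0_compat; nra).
  destruct (hb_ext_close x e He') as [n [u [H1 [N1 A1]]]].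
  pose proof (hb_ext_approx (vscal a x) n (vscal a u) (dom_scal _ _ _ H1)) as A3.
  rewrite dfun_scal, vnorm_scal_sub in A3 by auto.
  replace (hb_ext (vscal a x) - a * hb_ext x) with
    ((hb_ext (vscal a x) - a * dfun (chain n) u) - a * (hb_ext x - dfun (chain n) u)) by ring.
  eapply Rle_trans; [apply Rabs_triang|]. rewrite Rabs_Ropp, Rabs_mult.
  assert (Rabs a * Rabs (hb_ext x - dfun (chain n) u) <= Rabs a * (K * e))
    by (apply Rmult_le_compat_l; auto).
  assert (K * (Rabs a * vnorm (vsub x u)) <= K * (Rabs a * e))
    by (apply Rmult_le_compat_l; [lra | apply Rmult_le_compat_l; lra]).
  assert (K * e * (2 * (Rabs a + 1)) = eps) by (unfold e; field; lra).
  nra.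
Qed.

Lemma hb_ext_bound x : Rabs (hb_ext x) <= K * vnorm x.
Proof.
  pose proof (hb_ext_approx x 0 vzero (dom_0 _)) as A. simpl in A.
  rewrite Rminus_0_r in A. replace (vsub x vzero) with x in A by vec_eq. exact A.
Qed.

Lemma hb_ext_le x : hb_ext x <= q x.
Proof.
  apply le_epsilon. intros eps He.
  destruct (hqcont x (eps / 2) ltac:(lra)) as [del [Hd Hq]].
  set (e := Rmin del (eps / (2 * K))).
  assert (He' : e > 0) by (unfold e; apply Rmin_pos; auto; apply Rdiv_lt_0_compat; lra).
  destruct (hb_ext_close x e He') as [n [u [H1 [N1 A1]]]].
  assert (e <= del) by apply Rmin_l.
  specialize (Hq u ltac:(rewrite vnorm_sub_sym; lra)). apply Rabs_def2 in Hq.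
  pose proof (dfun_le _ _ H1).
  assert (K * e <= eps / 2).
  { apply Rle_trans with (K * (eps / (2 * K))); [apply Rmult_le_compat_l; [lra | apply Rmin_r]|].
    right; field; lra. }
  apply Rabs_le_between in A1. lra.
Qed.
End Chain.
End HahnBanach.

Lemma subdiff_nonempty (Z : Banach) (f : car Z -> R) : separable Z -> continuous_fun f ->
  convex_fun f -> forall z, exists xi, subdiff f z xi.
Proof.
  intros [d hd] hc hv z.
  set (q := fun u => f (vadd z u) - f z).
  assert (hqc : convex_fun q).
  { intros x y a Ha. unfold q.
    replace (vadd z (vadd (vscal a x) (vscal (1 - a) y)))
      with (vadd (vscal a (vadd z x)) (vscal (1 - a) (vadd z y))) by vec_eq.
    pose proof (hv (vadd z x) (vadd z y) a Ha). nra. }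
  assert (hq0 : q vzero = 0) by (unfold q; replace (vadd z vzero) with z by vec_eq; ring).
  assert (hqcont : continuous_fun q).
  { intros x eps He. destruct (hc (vadd z x) eps He) as [del [Hd H]]. exists del. split; auto.
    intros y Hy. unfold q.
    replace (f (vadd z y) - f z - (f (vadd z x) - f z)) with (f (vadd z y) - f (vadd z x)) by ring.
    apply H. replace (vsub (vadd z y) (vadd z x)) with (vsub y x) by vec_eq. auto. }
  destruct (dominated_bound q hq0 hqcont) as [K [HK HKb]].
  exists (hb_ext q hqc hq0 d K HK HKb). split.
  - split; [split|].
    + intros x y. apply (hb_ext_add q hqc hq0 d hd K HK).
    + intros a x. apply (hb_ext_scal q hqc hq0 d hd K HK).
    + exists K. apply hb_ext_bound.
  - intro y. pose proof (hb_ext_le q hqc hq0 hqcont d hd K HK HKb (vsub y z)) as H.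
    change (q (vsub y z)) with (f (vadd z (vsub y z)) - f z) in H. replace (vadd z (vsub y z)) with y in H by vec_eq. lra.
Qed.

(** * Essential coercivity *)

Lemma pow_half_pos n : 0 < (/2) ^ n.
Proof. apply pow_lt. lra. Qed.

Lemma ex_series_pow_half_bound (u : nat -> R) C :
  (forall n, Rabs (u n) <= C * (/2) ^ n) -> ex_series u.
Proof.
  intros H. apply (ex_series_le u (fun n => C * (/2) ^ n)); auto.
  apply (ex_series_scal_l C (fun n => (/2) ^ n)). apply ex_series_geom.
  rewrite Rabs_right; lra.
Qed.

Lemma Series_pow_half_bound (u : nat -> R) C :
  (forall n, Rabs (u n) <= C * (/2) ^ n) -> Rabs (Series u) <= 2 * C.
Proof.
  intros H.
  pose proof (is_series_geom (/2) ltac:(rewrite Rabs_right; lra)) as Hg.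
  replace (/ (1 - /2)) with 2 in Hg by field.
  eapply Rle_trans.
  { apply Series_Rabs, (ex_series_pow_half_bound _ C). intro n. rewrite Rabs_Rabsolu. apply H. }
  eapply Rle_trans.
  { apply (Series_le _ (fun n => C * (/2) ^ n)).
    - intro n. split; [apply Rabs_pos | apply H].
    - apply (ex_series_scal_l C (fun n => (/2) ^ n)). eexists; exact Hg. }
  assert (Series (fun n => C * (/2) ^ n) = C * 2)
    by (rewrite Series_scal_l; f_equal; apply is_series_unique; exact Hg).
  lra.
Qed.

Lemma Series_ge_term (u : nat -> R) k : (forall n, 0 <= u n) -> ex_series u -> u k <= Series u.
Proof.
  intros H He. rewrite (Series_incr_n u (S k)) by (auto; lia). simpl pred.
  assert (u k <= sum_f_R0 u k).
  { destruct k; simpl; [lra|]. pose proof (cond_pos_sum u k H). lra. }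
  assert (0 <= Series (fun j => u (S k + j)%nat)); [|lra].
  replace 0 with (Series (fun _ => 0)).
  - apply Series_le; [intro n; split; auto; lra|].
    apply (ex_series_incr_n u (S k)) in He. exact He.
  - rewrite (Series_ext _ (fun _ => 0 * 0)) by (intro; ring). rewrite Series_scal_l. ring.
Qed.

Section Rays.
Context {Z : Banach} (f : car Z -> R) (hcont : continuous_fun f)
  (z0 : car Z) (xi0 : car Z -> R) (H0 : subdiff f z0 xi0) (v : car Z).

(* [f - xi] is minimal at [p] and [f - xi0] is bounded below, so neither can
   strictly decrease along [v]: [f] has slope [xi v = xi0 v] on the ray from [p]. *)
Lemma ray_affine_of_nonincreasing p xi : subdiff f p xi ->
  nonincreasing_along (fun z => f z - xi z) v -> nonincreasing_along (fun z => f z - xi0 z) v ->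
  forall t, t >= 0 -> f (vadd p (vscal t v)) = f p + t * xi0 v.
Proof.
  intros Hp Hdec Hdec0.
  pose proof (proj1 (proj1 Hp)) as HL. pose proof (proj1 (proj1 H0)) as HL0.
  assert (E0 : vadd p (vscal 0 v) = p) by vec_eq.
  assert (Hk : forall t, t >= 0 -> f (vadd p (vscal t v)) = f p + t * xi v).
  { intros t Ht. destruct (Rle_lt_or_eq_dec 0 t) as [Hlt|<-]; [lra| |].
    - pose proof (Hdec p 0 t Hlt) as A. pose proof (subdiff_ineq f p xi (vadd p (vscal t v)) Hp) as B.
      cbv beta in A. rewrite E0 in A. lin_simpl_in HL A. lin_simpl_in HL B. lra.
    - rewrite E0. ring. }
  assert (Hle : xi v <= xi0 v).
  { pose proof (Hdec0 p 0 1 ltac:(lra)) as A. cbv beta in A.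
    rewrite (Hk 1), E0 in A by lra. lin_simpl_in HL0 A. lra. }
  assert (Hge : xi0 v <= xi v).
  { apply Rnot_lt_le. intro Hlt.
    set (m := f p - xi0 p - (f z0 - xi0 z0)).
    assert (Hm : 0 <= m) by (pose proof (subdiff_ineq f z0 xi0 p H0); unfold m; lra).
    set (T := m / (xi0 v - xi v) + 1).
    assert (HT : T >= 0) by (assert (0 <= m / (xi0 v - xi v)) by (apply Rdiv_le_0_compat; lra);
                             unfold T; lra).
    pose proof (subdiff_ineq f z0 xi0 (vadd p (vscal T v)) H0) as B.
    rewrite (Hk T HT) in B. lin_simpl_in HL0 B.
    assert (T * (xi0 v - xi v) > m) by (unfold T; field_simplify; lra).
    unfold m in H. nra. }
  intros t Ht. rewrite (Hk t Ht). replace (xi v) with (xi0 v) by lra. reflexivity.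
Qed.

Lemma lineality_of_dense_rays (d : nat -> car Z)
  (hd : forall z eps, eps > 0 -> exists n, vnorm (vsub z (d n)) < eps) :
  (forall k t, t >= 0 -> f (vadd (d k) (vscal t v)) = f (d k) + t * xi0 v) ->
  lineality f z0 xi0 v.
Proof.
  intros Hline.
  assert (Hall : forall z t, t >= 0 -> f (vadd z (vscal t v)) = f z + t * xi0 v).
  { intros z t Ht. apply Rminus_diag_uniq, Rabs_le_every_pos_0. intros eps He.
    destruct (hcont z (eps / 2) ltac:(lra)) as [d1 [Hd1 H1]].
    destruct (hcont (vadd z (vscal t v)) (eps / 2) ltac:(lra)) as [d2 [Hd2 H2]].
    destruct (hd z (Rmin d1 d2) ltac:(apply Rmin_pos; auto)) as [k Hk].
    pose proof (Rmin_l d1 d2). pose proof (Rmin_r d1 d2).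
    rewrite vnorm_sub_sym in Hk.
    specialize (H1 (d k) ltac:(lra)).
    specialize (H2 (vadd (d k) (vscal t v))).
    replace (vsub (vadd (d k) (vscal t v)) (vadd z (vscal t v))) with (vsub (d k) z) in H2
      by vec_eq.
    specialize (H2 ltac:(lra)). rewrite (Hline k t Ht) in H2.
    apply Rabs_def2 in H1, H2. apply Rabs_le. lra. }
  pose proof (proj1 (proj1 H0)) as HL0.
  intro t. lin_simpl HL0. destruct (Rle_or_lt 0 t) as [Ht|Ht].
  - rewrite (Hall z0 t ltac:(lra)). ring.
  - pose proof (Hall (vadd z0 (vscal t v)) (- t) ltac:(lra)) as A.
    replace (vadd (vadd z0 (vscal t v)) (vscal (- t) v)) with z0 in A by vec_eq. lra.
Qed.
End Rays.

Section Coercivity.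
Context {Z : Banach} (f : car Z -> R) (hcont : continuous_fun f) (hconv : convex_fun f)
  (d : nat -> car Z) (hd : forall z eps, eps > 0 -> exists n, vnorm (vsub z (d n)) < eps)
  (z0 : car Z) (xi0 : car Z -> R) (H0 : subdiff f z0 xi0)
  (xi : nat -> car Z -> R) (Hxi : forall n, subdiff f (d n) (xi n))
  (K : nat -> R) (HK0 : forall n, 0 <= K n)
  (HK : forall n w, Rabs (xi n w - xi0 w) <= K n * vnorm w).

Let HL0 : linear_fun xi0 := proj1 (proj1 H0).
Let HLn n : linear_fun (xi n) := proj1 (proj1 (Hxi n)).

Definition min_val n := f (d n) - xi n (d n).
Definition min_val0 := f z0 - xi0 z0.

(* Small enough that every series below converges, with [Series wt <= 1/2]. *)
Definition wt n := (/2) ^ n / 4 / (1 + K n + Rabs (min_val n)).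

Definition corr w := Series (fun n => wt n * (xi n w - xi0 w)).
Definition excess w := Series (fun n => wt n * (f w - xi n w - min_val n)).

Lemma wt_pos n : 0 < wt n.
Proof.
  unfold wt. pose proof (HK0 n). pose proof (Rabs_pos (min_val n)). pose proof (pow_half_pos n).
  apply Rdiv_lt_0_compat; lra.
Qed.

Lemma wt_mul_le n X : 0 <= X <= 1 + K n + Rabs (min_val n) -> wt n * X <= (/2) ^ n / 4.
Proof.
  intros HX. pose proof (HK0 n). pose proof (Rabs_pos (min_val n)). pose proof (pow_half_pos n).
  replace (wt n * X) with ((/2) ^ n / 4 * (X / (1 + K n + Rabs (min_val n))))
    by (unfold wt; field; lra).
  assert (X / (1 + K n + Rabs (min_val n)) <= 1).
  { apply (Rmult_le_reg_r (1 + K n + Rabs (min_val n))); [lra|].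
    unfold Rdiv. rewrite Rmult_assoc, Rinv_l by lra. lra. }
  assert (0 <= X / (1 + K n + Rabs (min_val n))) by (apply Rdiv_le_0_compat; lra).
  nra.
Qed.

Lemma corr_term_bound n w : Rabs (wt n * (xi n w - xi0 w)) <= vnorm w / 4 * (/2) ^ n.
Proof.
  rewrite Rabs_mult, Rabs_right by (pose proof (wt_pos n); lra).
  pose proof (wt_pos n). pose proof (HK n w). pose proof (vnorm_ge_0 w).
  assert (wt n * K n <= (/2) ^ n / 4)
    by (apply wt_mul_le; pose proof (HK0 n); pose proof (Rabs_pos (min_val n)); lra).
  apply Rle_trans with (wt n * K n * vnorm w); [rewrite Rmult_assoc; apply Rmult_le_compat_l; lra|].
  replace (vnorm w / 4 * (/2) ^ n) with ((/2) ^ n / 4 * vnorm w) by field.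
  apply Rmult_le_compat_r; lra.
Qed.

Lemma ex_corr_series w : ex_series (fun n => wt n * (xi n w - xi0 w)).
Proof. apply (ex_series_pow_half_bound _ (vnorm w / 4)). intro n. apply corr_term_bound. Qed.

Lemma corr_add x y : corr (vadd x y) = corr x + corr y.
Proof.
  unfold corr. rewrite <- Series_plus by apply ex_corr_series. apply Series_ext. intro n.
  rewrite (lin_add _ (HLn n)), (lin_add _ HL0). ring.
Qed.

Lemma corr_scal a x : corr (vscal a x) = a * corr x.
Proof.
  unfold corr. rewrite <- Series_scal_l. apply Series_ext. intro n.
  rewrite (lin_scal _ (HLn n)), (lin_scal _ HL0). ring.
Qed.

Lemma corr_linear : linear_fun corr.
Proof. split; [apply corr_add | apply corr_scal]. Qed.

Lemma corr_bound w : Rabs (corr w) <= vnorm w.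
Proof.
  pose proof (Series_pow_half_bound _ _ (fun n => corr_term_bound n w)) as H.
  pose proof (vnorm_ge_0 w). unfold corr. lra.
Qed.

Lemma corr_lineality y : lineality f z0 xi0 y -> corr y = 0.
Proof.
  intro Hy. unfold corr. rewrite (Series_ext _ (fun _ => 0 * 0)).
  - rewrite Series_scal_l. ring.
  - intro n. rewrite (lineality_slope f hcont hconv z0 xi0 (d n) (xi n) H0 (Hxi n) y Hy). ring.
Qed.

Lemma wt_scal_bound A n : Rabs (wt n * A) <= Rabs A / 4 * (/2) ^ n.
Proof.
  rewrite Rabs_mult, Rabs_right by (pose proof (wt_pos n); lra).
  assert (wt n <= (/2) ^ n / 4).
  { rewrite <- (Rmult_1_r (wt n)). apply wt_mul_le.
    pose proof (HK0 n). pose proof (Rabs_pos (min_val n)). lra. }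
  pose proof (Rabs_pos A). pose proof (wt_pos n).
  replace (Rabs A / 4 * (/2) ^ n) with ((/2) ^ n / 4 * Rabs A) by field.
  apply Rmult_le_compat_r; lra.
Qed.

Lemma wt_min_val_bound n : Rabs (wt n * min_val n) <= / 4 * (/2) ^ n.
Proof.
  rewrite Rabs_mult, Rabs_right by (pose proof (wt_pos n); lra).
  replace (/ 4 * (/2) ^ n) with ((/2) ^ n / 4) by field.
  apply wt_mul_le. pose proof (HK0 n). pose proof (Rabs_pos (min_val n)). lra.
Qed.

Definition wt_sum := Series wt.
Definition wt_min_sum := Series (fun n => wt n * min_val n).

Lemma wt_sum_le : wt_sum <= 1 / 2.
Proof.
  assert (H : forall n, Rabs (wt n) <= / 4 * (/2) ^ n).
  { intro n. pose proof (wt_scal_bound 1 n) as B.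
    rewrite Rmult_1_r, Rabs_R1 in B. lra. }
  pose proof (Series_pow_half_bound wt _ H). pose proof (Rle_abs wt_sum). unfold wt_sum in *. lra.
Qed.

Lemma excess_term_split w n : wt n * (f w - xi n w - min_val n) =
  wt n * (f w - xi0 w) - wt n * (xi n w - xi0 w) - wt n * min_val n.
Proof. ring. Qed.

Lemma ex_excess_series w : ex_series (fun n => wt n * (f w - xi n w - min_val n)).
Proof.
  apply (ex_series_pow_half_bound _ ((Rabs (f w - xi0 w) + vnorm w + 1) / 4)). intro n.
  rewrite excess_term_split.
  pose proof (wt_scal_bound (f w - xi0 w) n). pose proof (corr_term_bound n w).
  pose proof (wt_min_val_bound n).
  eapply Rle_trans; [apply Rabs_triang|]. rewrite Rabs_Ropp.
  eapply Rle_trans; [apply Rplus_le_compat_r, Rabs_triang|]. rewrite Rabs_Ropp. lra.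
Qed.

Lemma excess_decomposition w :
  f w - xi0 w - corr w = (1 - wt_sum) * (f w - xi0 w) + excess w + wt_min_sum.
Proof.
  set (A := f w - xi0 w).
  assert (E1 : ex_series (fun n => wt n * A))
    by (apply (ex_series_pow_half_bound _ (Rabs A / 4)), wt_scal_bound).
  assert (E2 : ex_series (fun n => wt n * min_val n))
    by (apply (ex_series_pow_half_bound _ (/ 4)), wt_min_val_bound).
  assert (Hex : excess w = A * wt_sum - corr w - wt_min_sum).
  { unfold excess. rewrite (Series_ext _ _ (excess_term_split w)).
    assert (E3 : ex_series (fun n => wt n * A - wt n * (xi n w - xi0 w))).
    { apply (ex_series_pow_half_bound _ ((Rabs A + vnorm w) / 4)). intro n.
      pose proof (wt_scal_bound A n). pose proof (corr_term_bound n w).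
      eapply Rle_trans; [apply Rabs_triang|]. rewrite Rabs_Ropp. lra. }
    rewrite Series_minus, Series_minus by (auto; apply ex_corr_series).
    unfold wt_sum, wt_min_sum, corr.
    rewrite <- Series_scal_l, (Series_ext (fun n => A * wt n) (fun n => wt n * A))
      by (intro; ring).
    reflexivity. }
  rewrite Hex. unfold A. ring.
Qed.

Lemma excess_ge_term w k : wt k * (f w - xi k w - min_val k) <= excess w.
Proof.
  apply (Series_ge_term (fun n => wt n * (f w - xi n w - min_val n))); [|apply ex_excess_series].
  intro n. apply Rmult_le_pos; [pose proof (wt_pos n); lra|].
  pose proof (subdiff_ineq f (d n) (xi n) w (Hxi n)). unfold min_val. lra.
Qed.

Lemma excess_ge_0 w : 0 <= excess w.
Proof.
  eapply Rle_trans; [|apply (excess_ge_term w 0)].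
  apply Rmult_le_pos; [pose proof (wt_pos 0); lra|].
  pose proof (subdiff_ineq f (d 0) (xi 0) w (Hxi 0)). unfold min_val. lra.
Qed.

(* An upper bound for [f - xi0 - corr] on a ray bounds [f - xi0] and every
   [f - xi n] there, through [excess_decomposition]. *)
Lemma bounded_ray_lineality x v B :
  (forall t, t >= 0 -> f (vadd x (vscal t v)) - xi0 (vadd x (vscal t v))
                       - corr (vadd x (vscal t v)) <= B) ->
  lineality f z0 xi0 v.
Proof.
  intros HB. pose proof wt_sum_le as Hs.
  set (C := B - wt_min_sum).
  assert (Hray : forall t, t >= 0 ->
    (1 - wt_sum) * (f (vadd x (vscal t v)) - xi0 (vadd x (vscal t v)))
    + excess (vadd x (vscal t v)) <= C).
  { intros t Ht. specialize (HB t Ht). rewrite excess_decomposition in HB. unfold C. lra. }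
  assert (Hdec0 : nonincreasing_along (fun z => f z - xi0 z) v).
  { apply (convex_bounded_ray_nonincreasing _ _ x v (C / (1 - wt_sum))).
    - apply convex_sub_linear; auto.
    - intros t Ht. specialize (Hray t Ht). pose proof (excess_ge_0 (vadd x (vscal t v))).
      apply (Rmult_le_reg_l (1 - wt_sum)); [lra|].
      replace ((1 - wt_sum) * (C / (1 - wt_sum))) with C by (field; lra). lra. }
  apply (lineality_of_dense_rays f hcont z0 xi0 H0 v d hd). intros k t Ht.
  apply (ray_affine_of_nonincreasing f z0 xi0 H0 v (d k) (xi k) (Hxi k)); auto.
  apply (convex_bounded_ray_nonincreasing _ _ x v
           (min_val k + (C - (1 - wt_sum) * min_val0) / wt k)).
  - apply convex_sub_linear; auto.
  - intros s Hs'. set (y := vadd x (vscal s v)).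
    specialize (Hray s Hs'). fold y in Hray.
    pose proof (excess_ge_term y k). pose proof (wt_pos k).
    pose proof (subdiff_ineq f z0 xi0 y H0) as Hm. unfold min_val0.
    assert (0 <= (1 - wt_sum) * (f y - xi0 y - (f z0 - xi0 z0))) by (apply Rmult_le_pos; lra).
    assert (wt k * (f y - xi k y - min_val k) <= C - (1 - wt_sum) * (f z0 - xi0 z0)) by lra.
    assert (f y - xi k y - min_val k <= (C - (1 - wt_sum) * (f z0 - xi0 z0)) / wt k); [|lra].
    apply (Rmult_le_reg_l (wt k)); [lra|].
    replace (wt k * ((C - (1 - wt_sum) * (f z0 - xi0 z0)) / wt k))
      with (C - (1 - wt_sum) * (f z0 - xi0 z0)) by (field; lra).
    lra.
Qed.

Lemma corr_dir_coercive :
  quot_dir_coercive (lineality f z0 xi0) (fun z => f z - xi0 z - corr z).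
Proof.
  intros x v Hv M.
  set (h := fun t => f (vadd x (vscal t v)) - xi0 (vadd x (vscal t v)) - corr (vadd x (vscal t v))).
  assert (Hch : convex_R h).
  { apply (convex_on_line Z (fun z => f z - xi0 z - corr z)).
    apply convex_sub_linear; [apply convex_sub_linear; auto | apply corr_linear]. }
  destruct (classic (exists t1 t2, t1 < t2 /\ h t1 < h t2)) as [[t1 [t2 [H12 Hh]]]|Hno].
  - exact (convex_R_increase_unbounded h t1 t2 Hch H12 Hh M).
  - exfalso. apply Hv, (bounded_ray_lineality x v (h 0)). intros t Ht.
    destruct (Rle_lt_or_eq_dec 0 t) as [Hlt|<-]; [lra| |apply Rle_refl].
    apply Rnot_lt_le. intro Hlt'. apply Hno. exists 0, t. auto.
Qed.

Lemma corr_in_quot_dual : in_quot_dual (lineality f z0 xi0) corr.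
Proof.
  split; [apply corr_linear|]. split; [apply corr_lineality|].
  exists 1. split; [lra|]. intros z y Hy.
  replace (corr z) with (corr (vadd z y)) by (rewrite corr_add, (corr_lineality y Hy); ring).
  rewrite Rmult_1_l. apply corr_bound.
Qed.
End Coercivity.

Lemma decomposes_lineality (Z : Banach) (f : Z -> R) (z0 : Z) (xi0 : Z -> R) :
  separable Z -> continuous_fun f -> convex_fun f -> subdiff f z0 xi0 ->
  decomposes f (lineality f z0 xi0).
Proof.
  intros hsep hcont hconv H0.
  pose proof (subdiff_nonempty Z f hsep hcont hconv) as Hsub.
  destruct hsep as [d hd].
  destruct (ClassicalEpsilon.choice (fun n xi => subdiff f (d n) xi) (fun n => Hsub (d n)))
    as [xi Hxi].
  destruct (ClassicalEpsilon.choice _ (fun n => in_dual_sub_bound _ _ (proj1 (Hxi n)) (proj1 H0)))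
    as [K HK].
  split; [apply lineality_closed_subspace; auto|].
  exists xi0, (fun z => f z - xi0 z).
  split; [apply H0|]. split; [apply lineality_coset_invariant; auto|].
  split; [apply convex_sub_linear; auto; apply H0|]. split; [|intro z; ring].
  exists (corr f d xi0 xi K).
  split; [apply (corr_in_quot_dual f hcont hconv d z0 xi0 H0 xi Hxi K); apply HK|].
  apply (corr_dir_coercive f hcont hconv d hd z0 xi0 H0 xi Hxi K); apply HK.
Qed.

Theorem mainTheorem3 (Z : Banach) (f : Z -> R)
  (hsep : separable Z) (hcont : continuous_fun f) (hconv : convex_fun f) :
  exists Yf : Z -> Prop,
    decomposes f Yf /\
    (forall Y' : Z -> Prop, decomposes f Y' -> forall v, Y' v <-> Yf v) /\
    (forall (z0 : Z) (xi0 : Z -> R), subdiff f z0 xi0 ->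
       forall v, Yf v <->
         (forall t : R, f (vadd z0 (vscal t v)) - f z0 - xi0 (vscal t v) = 0)).
Proof.
  destruct (subdiff_nonempty Z f hsep hcont hconv vzero) as [xi0 H0].
  exists (lineality f vzero xi0). split; [|split].
  - apply decomposes_lineality; auto.
  - intros Y' HY'. apply decomposes_lineality_unique; auto.
  - intros z1 xi1 H1 v. split.
    + apply (lineality_indep f hcont hconv vzero xi0 z1 xi1 H0 H1).
    + apply (lineality_indep f hcont hconv z1 xi1 vzero xi0 H1 H0).
Qed.
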